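(* Let $n\ge1$ be an integer, $b_a>0$, $b_v>0$, $c>0$, and consider the system on $[0,1]^2$ $$\dot p=p(1-p)\Big(\frac{b_a}{n+1}-q(b_v-c)\Big),\qquad \dot q=q(1-q)\Big(\frac{b_v}{n+1}\sum_{k=0}^n p^k-c\Big).$$ Suppose $b_a<(b_v-c)(n+1)$ and $b_v<c(n+1)$. Then there is an interior fixed point $(p^*,q^* )\in(0,1)^2$, where $q^*=\frac{b_a}{(b_v-c)(n+1)}$ and $p^*$ is the unique positive root of $\sum_{k=0}^n p^k=\frac{c(n+1)}{b_v}$, satisfying $1-\frac{b_v}{c(n+1)}\le p^*\le \frac{c(n+1)}{b_v}-1$. Moreover, with $$R(p)=\frac{b_v-c(n+1)}{n+1}\ln\frac{p}{1-p}-\frac{b_v}{n+1}\Big(n\ln(1-p)+\sum_{k=0}^{n-2}\frac{n-1-k}{k+1}p^{k+1}\Big),\qquad S(q)=\frac{b_a}{n+1}\ln\frac{q}{1-q}+(b_v-c)\ln(1-q),$$ the function $H(p,q)=R(p)-S(q)$ is constant along trajectories in $(0,1)^2$, has $(p^*,q^* )$ as its unique strict global minimum on $(0,1)^2$, and tends to $+\infty$ as $p$ or $q$ tends to $0$ or $1$; consequently $(p^*,q^* )$ is a center and every trajectory starting in $(0,1)^2$ other than the fixed point lies on a closed orbit in $(0,1)^2$ around $(p^*,q^* )$.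
   Context: This system is the replicator dynamics of the double goods game in factored form: $p$ is the proportion of glycolytic cells and $q$ the proportion of VEGF (over)producers among the aerobic cells; $b_a$ is the benefit per unit of acidification, $b_v$ the benefit per unit of vascularization, $c$ the cost of (over)producing VEGF, and $n$ the number of interaction partners. The parameter region in the hypothesis is the ''heterogeneous'' regime. *)

From Stdlib Require Import Reals Lra List.
From Coquelicot Require Import Coquelicot.
Open Scope R_scope.

(* rsum m f = sum_{k=0}^{m-1} f k  (empty sum = 0 when m = 0) *)
Definition rsum (m : nat) (f : nat -> R) : R :=
  fold_right Rplus 0 (map f (seq 0 m)).

Definition geo (n : nat) (p : R) : R := rsum (S n) (fun k => p ^ k).

Definition in01 (x : R) : Prop := 0 < x < 1.

Definition fp (ba bv c : R) (n : nat) (p q : R) : R :=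
  p * (1 - p) * (ba / INR (n + 1) - q * (bv - c)).
Definition fq (ba bv c : R) (n : nat) (p q : R) : R :=
  q * (1 - q) * (bv / INR (n + 1) * geo n p - c).

(* R(p): the inner sum is sum_{k=0}^{n-2} (n-1-k)/(k+1) p^(k+1) *)
Definition Rfun (ba bv c : R) (n : nat) (p : R) : R :=
  (bv - c * INR (n + 1)) / INR (n + 1) * ln (p / (1 - p))
  - bv / INR (n + 1) *
      (INR n * ln (1 - p)
       + rsum (n - 1) (fun k => INR (n - 1 - k) / INR (k + 1) * p ^ (k + 1))).

Definition Sfun (ba bv c : R) (n : nat) (q : R) : R :=
  ba / INR (n + 1) * ln (q / (1 - q)) + (bv - c) * ln (1 - q).

Definition Hfun (ba bv c : R) (n : nat) (p q : R) : R :=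
  Rfun ba bv c n p - Sfun ba bv c n q.

Definition is_solution (ba bv c : R) (n : nat) (p q : R -> R) : Prop :=
  forall t, in01 (p t) /\ in01 (q t) /\
    is_derive p t (fp ba bv c n (p t) (q t)) /\
    is_derive q t (fq ba bv c n (p t) (q t)).

From Stdlib Require Import Reals Lra Lia List Classical.
From Coquelicot Require Import Coquelicot.
Open Scope R_scope.

(* With u = p - ps and v = q - qs the system reads
     u' = - p(1-p) (b_v - c) v,      v' = q(1-q) B(p),      B(p) = b_v/(n+1) sum_k p^k - c,
   and (p - ps) B(p) >= b_v/(n+1) (p - ps)^2 because sum_k p^k grows at least linearly.
   Since R' = B(p) / (p(1-p)) and S' = (b_v - c)(qs - q) / (q(1-q)), the two terms of dH/dt
   cancel, R and -S decrease and then increase around ps and qs, and both blow up at 0 and 1.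
   A trajectory therefore stays in a compact part of the square, where (u, v) turns
   counterclockwise with speed bounded below; quarter by quarter it sweeps the whole level
   curve of H and returns to its starting half-axis, and uniqueness of solutions (the field
   is Lipschitz) makes it periodic. *)

Lemma fold_right_Rplus_init (l : list R) (x : R) :
  fold_right Rplus x l = fold_right Rplus 0 l + x.
Proof. induction l as [|a l IH]; simpl; [lra | rewrite IH; lra]. Qed.

Lemma rsum_S m f : rsum (S m) f = rsum m f + f m.
Proof.
  unfold rsum. rewrite seq_S, map_app, fold_right_app; simpl.
  rewrite fold_right_Rplus_init. lra.
Qed.

Lemma rsum_ext m f g : (forall k, (k < m)%nat -> f k = g k) -> rsum m f = rsum m g.
Proof.
  induction m as [|m IH]; intros Hfg; [reflexivity|].
  rewrite !rsum_S, IH, Hfg; auto with arith.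
Qed.

Lemma rsum_le m f g : (forall k, (k < m)%nat -> f k <= g k) -> rsum m f <= rsum m g.
Proof.
  induction m as [|m IH]; intros Hfg; [unfold rsum; simpl; lra|].
  rewrite !rsum_S. assert (f m <= g m) by auto with arith.
  assert (rsum m f <= rsum m g) by (apply IH; auto with arith). lra.
Qed.

Lemma rsum_nonneg m f : (forall k, (k < m)%nat -> 0 <= f k) -> 0 <= rsum m f.
Proof.
  intros Hf. replace 0 with (rsum m (fun _ => 0)) by
    (induction m as [|m IH]; [reflexivity | rewrite rsum_S, IH; auto with arith; lra]).
  now apply rsum_le.
Qed.

Lemma rsum_plus m f g : rsum m (fun k => f k + g k) = rsum m f + rsum m g.
Proof. induction m as [|m IH]; [unfold rsum; simpl; lra | rewrite !rsum_S, IH; lra]. Qed.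

Lemma is_derive_rsum m (F dF : nat -> R -> R) x :
  (forall k, is_derive (F k) x (dF k x)) ->
  is_derive (fun y => rsum m (fun k => F k y)) x (rsum m (fun k => dF k x)).
Proof.
  intros HF. induction m as [|m IH].
  - apply (is_derive_const 0).
  - apply (is_derive_ext (fun y => rsum m (fun k => F k y) + F m y)).
    { intros y; now rewrite rsum_S. }
    rewrite rsum_S. now apply (is_derive_plus (fun y => rsum m (fun k => F k y)) (F m)).
Qed.

Lemma pow2_gt_0 x : x <> 0 -> 0 < x ^ 2.
Proof. intros Hx. rewrite <- Rsqr_pow2. now apply Rsqr_pos_lt. Qed.

Lemma continuity_pt_of_is_derive (f : R -> R) x l : is_derive f x l -> continuity_pt f x.
Proof.
  intros Hf. apply continuity_pt_filterlim, (ex_derive_continuous (V := R_NormedModule)).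
  now exists l.
Qed.

Lemma mean_value (f df : R -> R) a b : a < b ->
  (forall x, a <= x <= b -> is_derive f x (df x)) ->
  exists c, a < c < b /\ f b - f a = df c * (b - a).
Proof.
  intros Hab Hf. destruct (MVT_cor2 f df a b Hab) as [c [Hc Hfc]].
  - intros x Hx. now apply is_derive_Reals, Hf.
  - now exists c.
Qed.

Lemma lt_of_is_derive_pos (f df : R -> R) a b : a < b ->
  (forall x, a <= x <= b -> is_derive f x (df x)) -> (forall x, a < x < b -> 0 < df x) ->
  f a < f b.
Proof.
  intros Hab Hf Hpos. destruct (mean_value f df a b Hab Hf) as [c [Hc Hfc]].
  specialize (Hpos c Hc). nra.
Qed.

Lemma constant_of_is_derive_0 (f : R -> R) : (forall t, is_derive f t 0) -> forall t s, f t = f s.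
Proof.
  intros Hf t s.
  destruct (Rtotal_order t s) as [Hts|[->|Hst]]; [| reflexivity |].
  - destruct (mean_value f (fun _ => 0) t s Hts) as [c [_ Hc]]; auto. lra.
  - destruct (mean_value f (fun _ => 0) s t Hst) as [c [_ Hc]]; auto. lra.
Qed.

Lemma ln_blowup k L : k < 0 -> exists d, 0 < d /\ forall z, 0 < z < d -> L < k * ln z.
Proof.
  intros Hk. exists (exp (L / k)). split; [apply exp_pos|].
  intros z Hz. pose proof (ln_increasing _ _ (proj1 Hz) (proj2 Hz)) as Hln.
  rewrite ln_exp in Hln. apply (Rmult_lt_compat_l (- k)) in Hln; [|lra].
  replace (- k * (L / k)) with (- L) in Hln by (field; lra). lra.
Qed.

Lemma ln_ratio x : in01 x -> ln (x / (1 - x)) = ln x - ln (1 - x).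
Proof.
  intros Hx. unfold in01, Rdiv in *.
  rewrite ln_mult, ln_Rinv; try lra. apply Rinv_0_lt_compat; lra.
Qed.

Lemma ln_neg x : 0 < x < 1 -> ln x < 0.
Proof. intros Hx. rewrite <- ln_1. apply ln_increasing; lra. Qed.

(* The root is the supremum of the initial stretch on which [f] stays positive. *)
Lemma first_root (f : R -> R) a b : (forall x, continuity_pt f x) -> a < b -> 0 < f a -> f b <= 0 ->
  exists r, a < r <= b /\ f r = 0 /\ forall t, a <= t < r -> 0 < f t.
Proof.
  intros Hf Hab Ha Hb.
  set (E := fun s => a <= s <= b /\ forall t, a <= t <= s -> 0 < f t).
  assert (Ea : E a) by (split; [lra | intros t Ht; replace t with a by lra; exact Ha]).
  assert (HE : bound E) by (exists b; intros s [Hs _]; lra).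
  destruct (completeness E HE (ex_intro _ a Ea)) as [r [Hub Hlub]].
  assert (Har : a <= r) by now apply Hub.
  assert (Hrb : r <= b) by (apply Hlub; intros s [Hs _]; lra).
  assert (Hpos : forall t, a <= t < r -> 0 < f t).
  { intros t Ht. destruct (classic (exists s, E s /\ t < s)) as [[s [[_ Hs] Hts]] | Hno].
    - apply Hs; lra.
    - exfalso. assert (Hubt : is_upper_bound E t).
      { intros s Es. destruct (Rle_or_lt s t); auto. exfalso; eauto. }
      specialize (Hlub t Hubt). lra. }
  assert (Hle : f r <= 0).
  { destruct (Rle_or_lt (f r) 0) as [|Hfr]; auto. exfalso.
    assert (Hrb' : r < b) by (destruct (Req_dec r b) as [->|]; lra).
    destruct (Hf r (f r) Hfr) as [d [Hd Hnear]].
    set (s := Rmin b (r + d / 2)).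
    assert (r < s <= r + d / 2) by (unfold s; split; [apply Rmin_glb_lt | apply Rmin_r]; lra).
    assert (s <= b) by apply Rmin_l.
    assert (E s).
    { split; [lra |].
      intros t Ht. destruct (Rlt_or_le t r); [apply Hpos; lra|].
      destruct (Req_dec t r) as [->|Htr]; [lra|].
      assert (Hft : Rdist (f t) (f r) < f r).
      { apply Hnear. split; [split; [exact I | congruence] |].
        simpl; unfold Rdist; rewrite Rabs_right; lra. }
      unfold Rdist in Hft. apply Rabs_def2 in Hft. lra. }
    assert (s <= r) by now apply Hub. lra. }
  assert (Hge : 0 <= f r).
  { destruct (Rle_or_lt 0 (f r)) as [|Hfr]; auto. exfalso.
    assert (Har' : a < r) by (destruct (Req_dec r a) as [->|]; lra).
    destruct (Hf r (- f r) ltac:(lra)) as [d [Hd Hnear]].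
    set (s := Rmax a (r - d / 2)).
    assert (r - d / 2 <= s < r) by (unfold s; split; [apply Rmax_r | apply Rmax_lub_lt]; lra).
    assert (Hfs : Rdist (f s) (f r) < - f r).
    { apply Hnear. split; [split; [exact I | intros Hsr; lra] |].
      simpl; unfold Rdist; rewrite Rabs_left; lra. }
    unfold Rdist in Hfs. apply Rabs_def2 in Hfs.
    assert (0 < f s) by (apply Hpos; split; [apply Rmax_l | lra]). lra. }
  exists r. repeat split; auto; try lra.
  destruct (Req_dec r a) as [->|]; lra.
Qed.

Lemma is_derive_Rext (f g : R -> R) x l :
  (forall t, f t = g t) -> is_derive f x l -> is_derive g x l.
Proof. apply is_derive_ext. Qed.

Lemma is_derive_minus_const (f : R -> R) x l a :
  is_derive f x l -> is_derive (fun t => f t - a) x l.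
Proof.
  intros Hf. rewrite <- (Rminus_0_r l).
  apply (is_derive_minus f (fun _ => a)); [exact Hf | apply (is_derive_const a)].
Qed.

Lemma is_derive_Rmult (f g : R -> R) x df dg : is_derive f x df -> is_derive g x dg ->
  is_derive (fun t => f t * g t) x (df * g x + f x * dg).
Proof. intros Hf Hg. apply (is_derive_mult f g); auto. intros; apply Rmult_comm. Qed.

Lemma is_derive_Rcomp (f g : R -> R) x df dg : is_derive f (g x) df -> is_derive g x dg ->
  is_derive (fun t => f (g t)) x (dg * df).
Proof. intros Hf Hg. now apply (is_derive_comp f g). Qed.

Lemma nonincreasing_of_is_derive (f df : R -> R) :
  (forall t, is_derive f t (df t)) -> (forall t, df t <= 0) -> forall t s, t <= s -> f s <= f t.
Proof.
  intros Hf Hdf t s Hts. destruct (Req_dec t s) as [->|Hne]; [lra|].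
  destruct (mean_value f df t s ltac:(lra)) as [c [_ Hc]]; auto.
  specialize (Hdf c). nra.
Qed.

(** * Uniqueness for Lipschitz planar systems *)

Lemma gronwall_forward (g dg : R -> R) K :
  (forall t, is_derive g t (dg t)) -> (forall t, 0 <= g t) -> (forall t, dg t <= K * g t) ->
  g 0 = 0 -> forall t, 0 <= t -> g t = 0.
Proof.
  intros Dg Hg Hdg g0 t Ht.
  set (phi := fun s => g s * exp (- K * s)).
  assert (Dphi : forall s, is_derive phi s ((dg s - K * g s) * exp (- K * s))).
  { intros s. unfold phi.
    replace ((dg s - K * g s) * exp (- K * s))
      with (dg s * exp (- K * s) + g s * (- K * exp (- K * s))) by ring.
    apply (is_derive_Rmult g (fun s => exp (- K * s))); [apply Dg |].
    auto_derive; [exact I | ring]. }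
  assert (Hphi : phi t <= phi 0).
  { apply (nonincreasing_of_is_derive phi _ Dphi); auto.
    intros s. pose proof (exp_pos (- K * s)). specialize (Hdg s). nra. }
  unfold phi in Hphi. rewrite g0, Rmult_0_l in Hphi.
  pose proof (exp_pos (- K * t)). specialize (Hg t). nra.
Qed.

Lemma gronwall (g dg : R -> R) K :
  (forall t, is_derive g t (dg t)) -> (forall t, 0 <= g t) -> (forall t, Rabs (dg t) <= K * g t) ->
  g 0 = 0 -> forall t, g t = 0.
Proof.
  intros Dg Hg Hdg g0 t. destruct (Rle_or_lt 0 t) as [Ht|Ht].
  - apply (gronwall_forward g dg K); auto.
    intros s. specialize (Hdg s). pose proof (Rle_abs (dg s)). lra.
  - rewrite <- (Ropp_involutive t).
    apply (gronwall_forward (fun s => g (- s)) (fun s => - dg (- s)) K); auto;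
      [| | rewrite Ropp_0 | lra].
    + intros s. replace (- dg (- s)) with (-1 * dg (- s)) by ring.
      apply (is_derive_Rcomp g (fun s => - s)); [apply Dg | auto_derive; [exact I | ring]].
    + intros s. specialize (Hdg (- s)). rewrite <- Rabs_Ropp in Hdg.
      pose proof (Rle_abs (- dg (- s))). lra.
    + exact g0.
Qed.

Definition lipschitz01 (f : R -> R -> R) (L : R) : Prop :=
  forall p1 q1 p2 q2, in01 p1 -> in01 q1 -> in01 p2 -> in01 q2 ->
    Rabs (f p1 q1 - f p2 q2) <= L * (Rabs (p1 - p2) + Rabs (q1 - q2)).

Lemma lipschitz01_uniqueness (f g : R -> R -> R) L (p1 q1 p2 q2 : R -> R) :
  0 <= L -> lipschitz01 f L -> lipschitz01 g L ->
  (forall t, in01 (p1 t) /\ in01 (q1 t) /\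
     is_derive p1 t (f (p1 t) (q1 t)) /\ is_derive q1 t (g (p1 t) (q1 t))) ->
  (forall t, in01 (p2 t) /\ in01 (q2 t) /\
     is_derive p2 t (f (p2 t) (q2 t)) /\ is_derive q2 t (g (p2 t) (q2 t))) ->
  p1 0 = p2 0 -> q1 0 = q2 0 -> forall t, p1 t = p2 t /\ q1 t = q2 t.
Proof.
  intros HL Lf Lg S1 S2 Ep Eq.
  set (a := fun t => p1 t - p2 t). set (b := fun t => q1 t - q2 t).
  set (da := fun t => f (p1 t) (q1 t) - f (p2 t) (q2 t)).
  set (db := fun t => g (p1 t) (q1 t) - g (p2 t) (q2 t)).
  assert (Dist : forall t, a t * a t + b t * b t = 0).
  { apply (gronwall _ (fun t => 2 * (a t * da t) + 2 * (b t * db t)) (4 * L)).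
    - intros t. destruct (S1 t) as (_ & _ & Dp1 & Dq1). destruct (S2 t) as (_ & _ & Dp2 & Dq2).
      assert (Da : is_derive a t (da t)) by now apply (is_derive_minus p1 p2).
      assert (Db : is_derive b t (db t)) by now apply (is_derive_minus q1 q2).
      replace (2 * (a t * da t) + 2 * (b t * db t))
        with ((da t * a t + a t * da t) + (db t * b t + b t * db t)) by ring.
      apply (is_derive_plus (fun t => a t * a t) (fun t => b t * b t));
        now apply is_derive_Rmult.
    - intros t. nra.
    - intros t. destruct (S1 t) as (P1 & Q1 & _). destruct (S2 t) as (P2 & Q2 & _).
      pose proof (Lf _ _ _ _ P1 Q1 P2 Q2) as Hf. pose proof (Lg _ _ _ _ P1 Q1 P2 Q2) as Hg.
      fold (a t) (b t) (da t) (db t) in Hf, Hg |- *.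
      pose proof (Rabs_pos (a t)). pose proof (Rabs_pos (b t)).
      assert (Ea : Rabs (a t) * Rabs (a t) = a t * a t)
        by (rewrite <- Rabs_mult; apply Rabs_right; nra).
      assert (Eb : Rabs (b t) * Rabs (b t) = b t * b t)
        by (rewrite <- Rabs_mult; apply Rabs_right; nra).
      assert (Ha : Rabs (a t) * Rabs (da t) <= Rabs (a t) * (L * (Rabs (a t) + Rabs (b t))))
        by (apply Rmult_le_compat_l; auto).
      assert (Hb : Rabs (b t) * Rabs (db t) <= Rabs (b t) * (L * (Rabs (a t) + Rabs (b t))))
        by (apply Rmult_le_compat_l; auto).
      (* |2 a da + 2 b db| <= 2 L (|a| + |b|)^2 <= 4 L (a^2 + b^2) *)
      eapply Rle_trans; [apply Rabs_triang|].
      rewrite !Rabs_mult, (Rabs_right 2) by lra.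
      pose proof (Rle_0_sqr (Rabs (a t) - Rabs (b t))). unfold Rsqr in *. nra.
    - unfold a, b. rewrite Ep, Eq. ring. }
  intros t. specialize (Dist t).
  assert (Ha : a t * a t = 0) by nra. assert (Hb : b t * b t = 0) by nra.
  apply Rmult_integral in Ha, Hb. unfold a, b in *. split; lra.
Qed.

Lemma geo_O x : geo 0 x = 1.
Proof. unfold geo, rsum; simpl; lra. Qed.

Lemma geo_S n x : geo (S n) x = geo n x + x ^ S n.
Proof. unfold geo. now rewrite rsum_S. Qed.

Lemma geo_shift n x : geo (S n) x = 1 + x * geo n x.
Proof.
  induction n as [|n IH]; [rewrite geo_S, geo_O; simpl; lra|].
  rewrite (geo_S (S n)), IH at 1. rewrite (geo_S n). simpl. ring.
Qed.

Lemma geo_mul n x : (1 - x) * geo n x = 1 - x ^ S n.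
Proof. induction n as [|n IH]; [rewrite geo_O; simpl; ring|]. rewrite geo_S. simpl in *. nra. Qed.

Lemma geo_at_0 n : geo n 0 = 1.
Proof. induction n as [|n IH]; [apply geo_O|]. rewrite geo_S, IH. simpl. lra. Qed.

Lemma geo_at_1 n : geo n 1 = INR (n + 1).
Proof.
  induction n as [|n IH]; [rewrite geo_O; simpl; lra|].
  rewrite geo_S, IH, pow1. replace (S n + 1)%nat with (S (n + 1)) by lia.
  rewrite S_INR. lra.
Qed.

Lemma geo_gap n x y : (1 <= n)%nat -> 0 <= x <= y -> y - x <= geo n y - geo n x.
Proof.
  intros Hn Hxy. induction n as [|[|n] IH]; [lia | rewrite !geo_S, !geo_O; simpl; lra |].
  rewrite (geo_S (S n) x), (geo_S (S n) y).
  assert (x ^ S (S n) <= y ^ S (S n)) by (apply pow_incr; lra).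
  assert (y - x <= geo (S n) y - geo (S n) x) by (apply IH; lia). lra.
Qed.

Lemma geo_strongly_increasing n x y : (1 <= n)%nat -> 0 <= x -> 0 <= y ->
  (x - y) ^ 2 <= (x - y) * (geo n x - geo n y).
Proof.
  intros Hn Hx Hy. destruct (Rle_or_lt x y).
  - pose proof (geo_gap n x y Hn ltac:(lra)). nra.
  - pose proof (geo_gap n y x Hn ltac:(lra)). nra.
Qed.

Definition dgeo (n : nat) (x : R) : R := rsum (S n) (fun k => INR k * x ^ pred k).

Lemma is_derive_geo n x : is_derive (geo n) x (dgeo n x).
Proof.
  apply (is_derive_rsum (S n) (fun k y => y ^ k) (fun k y => INR k * y ^ pred k)).
  intros k. rewrite <- (Rmult_1_r (INR k)) at 1.
  apply (is_derive_pow (fun y => y)). apply (is_derive_id x).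
Qed.

Lemma dgeo_bounds n x : 0 <= x <= 1 -> 0 <= dgeo n x <= dgeo n 1.
Proof.
  intros Hx. split; [apply rsum_nonneg | apply rsum_le]; intros k _.
  - apply Rmult_le_pos; [apply pos_INR | apply pow_le; lra].
  - apply Rmult_le_compat_l; [apply pos_INR | apply pow_incr; lra].
Qed.

Lemma geo_lipschitz n x y : 0 <= x <= 1 -> 0 <= y <= 1 ->
  Rabs (geo n x - geo n y) <= dgeo n 1 * Rabs (x - y).
Proof.
  intros Hx Hy.
  assert (Hmvt : forall a b, 0 <= a -> a < b -> b <= 1 ->
            Rabs (geo n b - geo n a) <= dgeo n 1 * Rabs (b - a)).
  { intros a b Ha Hab Hb. destruct (mean_value (geo n) (dgeo n) a b ltac:(lra)) as [z [Hz ->]].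
    { intros; apply is_derive_geo. }
    pose proof (dgeo_bounds n z ltac:(lra)).
    rewrite Rabs_mult, (Rabs_right (dgeo n z)) by lra.
    apply Rmult_le_compat_r; [apply Rabs_pos | lra]. }
  destruct (Rtotal_order x y) as [Hxy|[->|Hxy]].
  - rewrite Rabs_minus_sym, (Rabs_minus_sym x). apply Hmvt; lra.
  - rewrite !Rminus_diag, Rabs_R0. pose proof (dgeo_bounds n 1). lra.
  - apply Hmvt; lra.
Qed.

Lemma geo_inj n x y : (1 <= n)%nat -> 0 <= x -> 0 <= y -> geo n x = geo n y -> x = y.
Proof.
  intros Hn Hx Hy Hxy. pose proof (geo_strongly_increasing n x y Hn Hx Hy) as Hmon.
  rewrite Hxy, Rminus_diag, Rmult_0_r in Hmon. nra.
Qed.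

(** * Centers of planar flows with a separable first integral *)

Definition valley (F : R -> R) (lo hi : R) : Prop :=
  (forall a b, 0 <= a -> a < b -> b < hi -> F a < F b) /\
  (forall a b, lo < a -> a < b -> b <= 0 -> F b < F a).

Lemma valley_of_is_derive (f df : R -> R) m lo hi : lo < m < hi ->
  (forall x, lo < x < hi -> is_derive f x (df x)) ->
  (forall x, lo < x < hi -> x <> m -> 0 < (x - m) * df x) ->
  valley (fun a => f (m + a)) (lo - m) (hi - m).
Proof.
  intros Hm Df Hsign. split; intros a b Ha Hab Hb.
  - apply (lt_of_is_derive_pos f df (m + a) (m + b)); [lra | intros; apply Df; lra |].
    intros x Hx. specialize (Hsign x ltac:(lra) ltac:(lra)). nra.
  - apply Ropp_lt_cancel.
    apply (lt_of_is_derive_pos (fun x => - f x) (fun x => - df x) (m + a) (m + b)); [lra | |].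
    + intros x Hx. apply (is_derive_opp f), Df. lra.
    + intros x Hx. specialize (Hsign x ltac:(lra) ltac:(lra)). nra.
Qed.

Lemma valley_opp {F lo hi} : valley F lo hi -> valley (fun a => F (- a)) (- hi) (- lo).
Proof. intros [Fup Fdown]; split; intros a b Ha Hab Hb; [apply Fdown | apply Fup]; lra. Qed.

Lemma valley_min F lo hi a : valley F lo hi -> lo < a < hi -> a <> 0 -> F 0 < F a.
Proof.
  intros [Fup Fdown] Ha Ha0. destruct (Rle_or_lt a 0).
  - apply Fdown; lra.
  - apply Fup; lra.
Qed.

(* [v] moves in the direction of [u] and [u] against [v], each at a speed at least [k]
   times the other coordinate: the point (u, v) turns counterclockwise around 0. *)
Definition rotating (k : R) (u v du dv : R -> R) : Prop :=
  0 < k /\ (forall t, is_derive u t (du t)) /\ (forall t, is_derive v t (dv t)) /\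
  (forall t, k * u t ^ 2 <= u t * dv t) /\ (forall t, k * v t ^ 2 <= - (v t * du t)).

Lemma rotating_quarter {k u v du dv} : rotating k u v du dv ->
  rotating k v (fun t => - u t) dv (fun t => - du t).
Proof.
  intros (Hk & Du & Dv & Hu & Hv). refine (conj Hk (conj Dv (conj _ (conj _ _)))).
  - intros t. now apply (is_derive_opp u).
  - intros t. specialize (Hv t). lra.
  - intros t. specialize (Hu t). nra.
Qed.

Lemma quarter_turn {k u v du dv} t0 : rotating k u v du dv -> 0 < u t0 -> 0 <= v t0 ->
  exists t1, t0 < t1 /\ u t1 = 0 /\ 0 < v t1 /\ forall t, t0 <= t <= t1 -> v t0 <= v t.
Proof.
  intros (Hk & Du & Dv & Hu & Hv) Hu0 Hv0.
  assert (v_up : forall s t, s < t -> (forall r, s < r < t -> 0 < u r) -> v s < v t).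
  { intros s t Hst Hpos. apply (lt_of_is_derive_pos v dv); auto.
    intros r Hr. specialize (Hpos r Hr). specialize (Hu r).
    assert (0 < k * u r ^ 2) by (apply Rmult_lt_0_compat; [lra | apply pow_lt; lra]). nra. }
  assert (Hcross : exists t2, t0 < t2 /\ u t2 <= 0).
  { apply NNPP. intros Hno.
    assert (Upos : forall t, t0 <= t -> 0 < u t).
    { intros t Ht. destruct (Rle_or_lt (u t) 0) as [Hle|]; auto.
      destruct (Req_dec t t0) as [->|]; [lra|]. exfalso; apply Hno; exists t; split; lra. }
    (* Once [v] has grown to [y1 > 0], [u] decreases at rate at least [k y1]. *)
    set (y1 := v (t0 + 1)).
    assert (Hy1 : v t0 < y1) by (apply v_up; intros; try apply Upos; lra).
    assert (Hdu : forall t, t0 + 1 <= t -> du t <= - (k * y1)).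
    { intros t Ht. assert (y1 <= v t).
      { destruct (Req_dec t (t0 + 1)) as [->|]; [unfold y1; lra|].
        left. apply v_up; intros; try apply Upos; lra. }
      specialize (Hv t).
      assert (Hdv : du t + k * v t <= 0).
      { destruct (Rle_or_lt (du t + k * v t) 0) as [|Hgt]; auto.
        assert (0 < v t * (du t + k * v t)) by (apply Rmult_lt_0_compat; lra). nra. }
      nra. }
    assert (Hu1 : 0 < u (t0 + 1)) by (apply Upos; lra).
    assert (Hky : 0 < k * y1) by nra.
    set (D := 1 + u (t0 + 1) / (k * y1)).
    assert (HD : k * y1 * D = k * y1 + u (t0 + 1)) by (unfold D; field; lra).
    assert (0 < D) by (unfold D; pose proof (Rdiv_lt_0_compat _ _ Hu1 Hky); lra).
    destruct (mean_value u du (t0 + 1) (t0 + 1 + D)) as [c [Hc Hmv]]; [lra | auto |].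
    specialize (Hdu c ltac:(lra)). assert (0 < u (t0 + 1 + D)) by (apply Upos; lra).
    replace (t0 + 1 + D - (t0 + 1)) with D in Hmv by ring. nra. }
  destruct Hcross as [t2 [Ht2 Hu2]].
  destruct (first_root u t0 t2) as [t1 [Ht1 [Hz Hpos]]]; auto.
  { intros x. apply (continuity_pt_of_is_derive u x (du x)), Du. }
  assert (Hmono : forall t, t0 < t <= t1 -> v t0 < v t).
  { intros t Ht. apply v_up; [lra|]. intros r Hr. apply Hpos; lra. }
  exists t1. repeat split; auto; try lra.
  - specialize (Hmono t1 ltac:(lra)). lra.
  - intros t Ht. destruct (Req_dec t t0) as [->|]; [lra|]. left; apply Hmono; lra.
Qed.

Lemma reach_axis {k u v du dv} t0 : rotating k u v du dv -> (u t0, v t0) <> (0, 0) ->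
  exists t, 0 < u t /\ v t = 0.
Proof.
  intros R0 Hne.
  pose proof (rotating_quarter R0) as R1.
  pose proof (rotating_quarter R1) as R2.
  pose proof (rotating_quarter R2) as R3.
  assert (from_Q4 : forall t, v t < 0 -> 0 <= u t -> exists s, 0 < u s /\ v s = 0).
  { intros t Hv Hu. destruct (quarter_turn t R3) as [s (_ & Hs1 & Hs2 & _)]; simpl; try lra.
    exists s. lra. }
  assert (from_Q3 : forall t, u t < 0 -> v t <= 0 -> exists s, 0 < u s /\ v s = 0).
  { intros t Hu Hv. destruct (quarter_turn t R2) as [s (_ & Hs1 & Hs2 & _)]; simpl; try lra.
    apply (from_Q4 s); lra. }
  assert (from_Q2 : forall t, 0 < v t -> u t <= 0 -> exists s, 0 < u s /\ v s = 0).
  { intros t Hv Hu. destruct (quarter_turn t R1) as [s (_ & Hs1 & Hs2 & _)]; simpl; try lra.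
    apply (from_Q3 s); lra. }
  destruct (Rtotal_order (u t0) 0) as [Hu|[Hu|Hu]];
    destruct (Rtotal_order (v t0) 0) as [Hv|[Hv|Hv]].
  all: try (apply (from_Q2 t0); lra); try (apply (from_Q3 t0); lra); try (apply (from_Q4 t0); lra).
  - exfalso. apply Hne. now rewrite Hu, Hv.
  - now exists t0.
  - destruct (quarter_turn t0 R0) as [s (_ & Hs1 & Hs2 & _)]; try lra.
    apply (from_Q2 s); lra.
Qed.

Definition conservative_center (k : R) (u v du dv F G : R -> R) (h lu hu lv hv : R) : Prop :=
  rotating k u v du dv /\ valley F lu hu /\ valley G lv hv /\
  (forall t, lu < u t < hu /\ lv < v t < hv) /\ (forall t, F (u t) + G (v t) = h).

Lemma conservative_center_quarter {k u v du dv F G h lu hu lv hv} :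
  conservative_center k u v du dv F G h lu hu lv hv ->
  conservative_center k v (fun t => - u t) dv (fun t => - du t)
    G (fun a => F (- a)) h lv hv (- hu) (- lu).
Proof.
  intros (Rot & VF & VG & Dom & Cons).
  refine (conj (rotating_quarter Rot) (conj VG (conj (valley_opp VF) (conj _ _)))).
  - intros t. specialize (Dom t). lra.
  - intros t. rewrite Ropp_involutive. specialize (Cons t). lra.
Qed.

Lemma quarter_cover {k u v du dv F G h lu hu lv hv} t0 :
  conservative_center k u v du dv F G h lu hu lv hv -> 0 < u t0 -> v t0 = 0 ->
  exists t1, t0 < t1 /\ u t1 = 0 /\ 0 < v t1 /\
    forall a b, 0 <= a < hu -> 0 <= b < hv -> F a + G b = h -> exists t, u t = a /\ v t = b.
Proof.
  intros (Rot & [Fup _] & [Gup _] & Dom & Cons) Hu0 Hv0.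
  pose proof Rot as (_ & Du & _).
  destruct (quarter_turn t0 Rot) as [t1 (Ht1 & Hu1 & Hv1 & Hmono)]; try lra.
  exists t1. refine (conj Ht1 (conj Hu1 (conj Hv1 _))).
  intros a b Ha Hb Hab.
  assert (Ha0 : a <= u t0).
  { destruct (Rle_or_lt a (u t0)) as [|Hlt]; auto. exfalso.
    assert (F (u t0) < F a) by (apply Fup; lra).
    assert (G 0 <= G b) by (destruct (Req_dec b 0) as [->|]; [lra | left; apply Gup; lra]).
    specialize (Cons t0). rewrite Hv0 in Cons. lra. }
  destruct (IVT_gen u t0 t1 a) as [t [Ht Hut]].
  { intros x. apply (continuity_pt_of_is_derive u x (du x)), Du. }
  { rewrite Hu1, Rmin_right, Rmax_left; lra. }
  rewrite Rmin_left, Rmax_right in Ht by lra.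
  exists t. split; auto.
  specialize (Hmono t Ht). specialize (Cons t). rewrite Hut in Cons.
  destruct (Dom t) as [_ Hvt].
  destruct (Rtotal_order (v t) b) as [Hlt|[|Hlt]]; auto; exfalso.
  - assert (G (v t) < G b) by (apply Gup; lra). lra.
  - assert (G b < G (v t)) by (apply Gup; lra). lra.
Qed.

Lemma circuit {k u v du dv F G h lu hu lv hv} t0 :
  conservative_center k u v du dv F G h lu hu lv hv -> 0 < u t0 -> v t0 = 0 ->
  exists t4, t0 < t4 /\ u t4 = u t0 /\ v t4 = 0 /\
    forall a b, lu < a < hu -> lv < b < hv -> F a + G b = h -> exists t, u t = a /\ v t = b.
Proof.
  intros C0 Hu0 Hv0.
  pose proof (conservative_center_quarter C0) as C1.
  pose proof (conservative_center_quarter C1) as C2.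
  pose proof (conservative_center_quarter C2) as C3.
  destruct (quarter_cover t0 C0) as [t1 (Ht1 & Hu1 & Hv1 & Cov0)]; auto.
  destruct (quarter_cover t1 C1) as [t2 (Ht2 & Hu2 & Hv2 & Cov1)]; auto; try lra.
  destruct (quarter_cover t2 C2) as [t3 (Ht3 & Hu3 & Hv3 & Cov2)]; auto; try lra.
  destruct (quarter_cover t3 C3) as [t4 (Ht4 & Hu4 & Hv4 & Cov3)]; auto; try lra.
  destruct C0 as (_ & [Fup _] & _ & Dom & Cons).
  exists t4. repeat split; [lra | | lra |].
  - rewrite Ropp_involutive in Hv4.
    assert (HF : F (u t4) = F (u t0)).
    { pose proof (Cons t0) as E0. pose proof (Cons t4) as E4.
      rewrite Hv0 in E0. replace (v t4) with 0 in E4 by lra. lra. }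
    destruct (Dom t0) as [[_ Hd0] _]. destruct (Dom t4) as [[_ Hd4] _].
    destruct (Rtotal_order (u t4) (u t0)) as [Hlt|[|Hlt]]; auto; exfalso.
    + assert (F (u t4) < F (u t0)) by (apply Fup; lra). lra.
    + assert (F (u t0) < F (u t4)) by (apply Fup; lra). lra.
  - intros a b Ha Hb Hab.
    destruct (Rle_or_lt 0 a); destruct (Rle_or_lt 0 b).
    + apply Cov0; lra.
    + destruct (Cov3 (- b) a) as [t [Et1 Et2]]; try lra.
      { rewrite !Ropp_involutive. lra. }
      exists t. rewrite Ropp_involutive in Et2. lra.
    + destruct (Cov1 b (- a)) as [t [Et1 Et2]]; try lra.
      { rewrite Ropp_involutive. lra. }
      exists t. lra.
    + destruct (Cov2 (- a) (- b)) as [t [Et1 Et2]]; try lra.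
      { rewrite !Ropp_involutive. lra. }
      exists t. lra.
Qed.

(** * The double goods game *)

Definition Rpoly (n : nat) (x : R) : R :=
  rsum (n - 1) (fun k => INR (n - 1 - k) / INR (k + 1) * x ^ (k + 1)).

Lemma weighted_powers m x :
  (1 - x) * rsum m (fun k => INR (m - k) * x ^ k) = INR m + 1 - geo m x.
Proof.
  induction m as [|m IH]; [rewrite geo_O; unfold rsum; simpl; lra|].
  rewrite (rsum_ext (S m) _ (fun k => INR (m - k) * x ^ k + x ^ k)).
  2: { intros k Hk. replace (S m - k)%nat with (S (m - k)) by lia. rewrite S_INR. ring. }
  rewrite rsum_plus, (rsum_S m (fun k => INR (m - k) * x ^ k)).
  rewrite Nat.sub_diag, Rmult_0_l, Rplus_0_r.
  change (rsum (S m) (pow x)) with (geo m x).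
  rewrite Rmult_plus_distr_l, IH, geo_mul, geo_S, S_INR. simpl. ring.
Qed.

Lemma is_derive_Rpoly n x :
  is_derive (Rpoly n) x (rsum (n - 1) (fun k => INR (n - 1 - k) * x ^ k)).
Proof.
  set (dF := fun k y => INR (n - 1 - k) / INR (k + 1) * (INR (k + 1) * 1 * y ^ pred (k + 1))).
  rewrite (rsum_ext _ _ (fun k => dF k x)).
  2: { intros k _. unfold dF. replace (pred (k + 1)) with k by lia. field. apply not_0_INR. lia. }
  apply (is_derive_rsum (n - 1) (fun k y => INR (n - 1 - k) / INR (k + 1) * y ^ (k + 1)) dF).
  intros k. apply is_derive_scal, (is_derive_pow (fun y => y)). apply (is_derive_id x).
Qed.

Lemma Rpoly_bounds n x : 0 <= x <= 1 -> 0 <= Rpoly n x <= Rpoly n 1.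
Proof.
  intros Hx. assert (Hcoef : forall k, 0 <= INR (n - 1 - k) / INR (k + 1)).
  { intros k. apply Rdiv_le_0_compat; [apply pos_INR | apply lt_0_INR; lia]. }
  split; [apply rsum_nonneg | apply rsum_le]; intros k _.
  - apply Rmult_le_pos; [apply Hcoef | apply pow_le; lra].
  - apply Rmult_le_compat_l; [apply Hcoef | apply pow_incr; lra].
Qed.

Section DoubleGoods.

Variables (n : nat) (ba bv c : R).
Hypotheses (n_pos : (1 <= n)%nat) (ba_pos : 0 < ba) (bv_pos : 0 < bv) (c_pos : 0 < c)
  (ba_lt : ba < (bv - c) * INR (n + 1)) (bv_lt : bv < c * INR (n + 1)).

Local Notation N := (INR (n + 1)).
Local Notation qs := (ba / ((bv - c) * N)).

Lemma N_pos : 0 < N.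
Proof. apply lt_0_INR. lia. Qed.

Lemma c_lt_bv : c < bv.
Proof. pose proof N_pos. destruct (Rlt_or_le c bv); auto. nra. Qed.

Lemma qs_in01 : in01 qs.
Proof.
  pose proof N_pos. pose proof c_lt_bv. assert (0 < (bv - c) * N) by nra.
  split; [apply Rdiv_lt_0_compat; lra|].
  apply (Rmult_lt_reg_r ((bv - c) * N)); auto. field_simplify; lra.
Qed.

Lemma fp_factor p q : fp ba bv c n p q = p * (1 - p) * ((bv - c) * (qs - q)).
Proof. pose proof N_pos. pose proof c_lt_bv. unfold fp. field. lra. Qed.

Lemma is_derive_Rfun x : in01 x ->
  is_derive (Rfun ba bv c n) x ((bv / N * geo n x - c) / (x * (1 - x))).
Proof.
  intros Hx. unfold in01 in Hx. pose proof N_pos.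
  set (a := (bv - c * N) / N). set (g := bv / N).
  apply (is_derive_Rext
           (fun y => (a * ln (y / (1 - y)) - g * (INR n * ln (1 - y))) - g * Rpoly n y)).
  { intros y. unfold Rfun, Rpoly. fold a g. ring. }
  destruct n as [|m]; [lia|]. replace (S m - 1)%nat with m by lia. rewrite S_INR.
  pose proof (weighted_powers m x) as Hw.
  replace ((g * geo (S m) x - c) / (x * (1 - x))) with
    ((a * / (x * (1 - x)) - g * ((INR m + 1) * - / (1 - x)))
     - g * rsum m (fun k => INR (m - k) * x ^ k)).
  - apply (is_derive_minus (fun y => a * ln (y / (1 - y)) - g * ((INR m + 1) * ln (1 - y)))
                           (fun y => g * Rpoly (S m) y)).
    + auto_derive; [repeat split; try lra; apply Rdiv_lt_0_compat; lra | field; lra].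
    + apply is_derive_scal. pose proof (is_derive_Rpoly (S m) x) as D.
      replace (S m - 1)%nat with m in D by lia. exact D.
  - replace (rsum m (fun k => INR (m - k) * x ^ k)) with ((INR m + 1 - geo m x) / (1 - x))
      by (rewrite <- Hw; field; lra).
    unfold a, g. rewrite geo_shift.
    replace (INR (S m + 1)) with (INR m + 2) in * by (rewrite plus_INR, S_INR; simpl; ring).
    field. lra.
Qed.

Lemma is_derive_Sfun y : in01 y ->
  is_derive (Sfun ba bv c n) y ((bv - c) * (qs - y) / (y * (1 - y))).
Proof.
  intros Hy. unfold in01 in Hy. pose proof N_pos. pose proof c_lt_bv. unfold Sfun.
  auto_derive; [repeat split; try lra; apply Rdiv_lt_0_compat; lra | field; lra].
Qed.

Lemma Hfun_conserved p q : is_solution ba bv c n p q ->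
  forall t, Hfun ba bv c n (p t) (q t) = Hfun ba bv c n (p 0) (q 0).
Proof.
  intros Hsol t. apply (constant_of_is_derive_0 (fun t => Hfun ba bv c n (p t) (q t))).
  intros s. destruct (Hsol s) as (Hp & Hq & Dp & Dq).
  pose proof N_pos. pose proof c_lt_bv. unfold in01 in *.
  (* The two products cancel: each is p(1-p) q(1-q) times the product of the two gains. *)
  replace 0 with (fp ba bv c n (p s) (q s) * ((bv / N * geo n (p s) - c) / (p s * (1 - p s)))
                 - fq ba bv c n (p s) (q s) * ((bv - c) * (qs - q s) / (q s * (1 - q s)))).
  2: { rewrite fp_factor. unfold fq. field. repeat split; lra. }
  apply (is_derive_minus (fun t => Rfun ba bv c n (p t)) (fun t => Sfun ba bv c n (q t))).
  - apply (is_derive_Rcomp (Rfun ba bv c n) p); auto. apply is_derive_Rfun. split; lra.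
  - apply (is_derive_Rcomp (Sfun ba bv c n) q); auto. apply is_derive_Sfun. split; lra.
Qed.

Lemma Hfun_blowup M : exists d, 0 < d /\
  forall x y, in01 x -> in01 y -> (x < d \/ 1 - d < x \/ y < d \/ 1 - d < y) ->
    M < Hfun ba bv c n x y.
Proof.
  pose proof N_pos. pose proof c_lt_bv.
  set (k1 := (bv - c * N) / N). set (k2 := c - bv).
  set (k3 := - (ba / N)). set (k4 := ba / N - (bv - c)). set (g := bv / N).
  assert (Hk1 : k1 < 0) by (unfold k1; apply (Rmult_lt_reg_r N); auto; field_simplify; lra).
  assert (Hk2 : k2 < 0) by (unfold k2; lra).
  assert (Hk3 : k3 < 0) by (unfold k3; pose proof (Rdiv_lt_0_compat ba N); lra).
  assert (Hk4 : k4 < 0) by (unfold k4; apply (Rmult_lt_reg_r N); auto; field_simplify; lra).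
  assert (Hg : 0 < g) by (apply Rdiv_lt_0_compat; lra).
  assert (Hsplit : forall x y, in01 x -> in01 y -> Hfun ba bv c n x y =
    k1 * ln x + k2 * ln (1 - x) + k3 * ln y + k4 * ln (1 - y) - g * Rpoly n x).
  { intros x y Hx Hy. unfold Hfun, Rfun, Sfun, Rpoly. rewrite !ln_ratio by auto.
    unfold k1, k2, k3, k4, g. rewrite plus_INR in *. simpl in *. field. lra. }
  assert (Hterm : forall k z, k < 0 -> 0 < z < 1 -> 0 <= k * ln z).
  { intros k z Hk Hz. pose proof (ln_neg z Hz). nra. }
  set (B := g * Rpoly n 1).
  assert (HB : forall x, in01 x -> 0 <= g * Rpoly n x <= B).
  { intros x Hx. unfold in01 in Hx. pose proof (Rpoly_bounds n x ltac:(lra)).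
    unfold B. split; [| apply Rmult_le_compat_l]; nra. }
  destruct (ln_blowup k1 (M + B) Hk1) as [d1 [Hd1 Bl1]].
  destruct (ln_blowup k2 (M + B) Hk2) as [d2 [Hd2 Bl2]].
  destruct (ln_blowup k3 (M + B) Hk3) as [d3 [Hd3 Bl3]].
  destruct (ln_blowup k4 (M + B) Hk4) as [d4 [Hd4 Bl4]].
  exists (Rmin (Rmin d1 d2) (Rmin d3 d4)). split; [repeat apply Rmin_pos; auto|].
  intros x y Hx Hy Hnear. rewrite (Hsplit x y Hx Hy).
  pose proof (HB x Hx). unfold in01 in Hx, Hy.
  pose proof (Hterm k1 x Hk1 Hx). pose proof (Hterm k2 (1 - x) Hk2 ltac:(lra)).
  pose proof (Hterm k3 y Hk3 Hy). pose proof (Hterm k4 (1 - y) Hk4 ltac:(lra)).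
  pose proof (Rmin_l (Rmin d1 d2) (Rmin d3 d4)). pose proof (Rmin_r (Rmin d1 d2) (Rmin d3 d4)).
  pose proof (Rmin_l d1 d2). pose proof (Rmin_r d1 d2).
  pose proof (Rmin_l d3 d4). pose proof (Rmin_r d3 d4).
  destruct Hnear as [Hn1|[Hn2|[Hn3|Hn4]]].
  - specialize (Bl1 x ltac:(lra)). lra.
  - specialize (Bl2 (1 - x) ltac:(lra)). lra.
  - specialize (Bl3 y ltac:(lra)). lra.
  - specialize (Bl4 (1 - y) ltac:(lra)). lra.
Qed.

Lemma geo_between x : 0 <= x <= 1 -> 1 <= geo n x <= N.
Proof.
  intros Hx. rewrite <- (geo_at_0 n), <- (geo_at_1 n).
  pose proof (geo_gap n 0 x n_pos ltac:(lra)). pose proof (geo_gap n x 1 n_pos ltac:(lra)). lra.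
Qed.

Local Notation Lip := (ba / N + bv + c + bv / N * dgeo n 1).

Lemma Lip_nonneg : 0 <= Lip.
Proof.
  pose proof N_pos. pose proof (dgeo_bounds n 1 ltac:(lra)).
  assert (0 <= ba / N) by (apply Rdiv_le_0_compat; lra).
  assert (0 <= bv / N) by (apply Rdiv_le_0_compat; lra). nra.
Qed.

Lemma fp_lipschitz : lipschitz01 (fp ba bv c n) Lip.
Proof.
  intros p1 q1 p2 q2 Hp1 Hq1 Hp2 Hq2. unfold in01 in *.
  pose proof N_pos. pose proof c_lt_bv. pose proof (dgeo_bounds n 1 ltac:(lra)).
  assert (0 <= bv / N * dgeo n 1) by (apply Rmult_le_pos; [apply Rdiv_le_0_compat|]; lra).
  assert (Hba : 0 < ba / N) by (apply Rdiv_lt_0_compat; lra).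
  set (X := (1 - p1 - p2) * (ba / N - q1 * (bv - c))).
  set (Y := - (p2 * (1 - p2) * (bv - c))).
  replace (fp ba bv c n p1 q1 - fp ba bv c n p2 q2) with (X * (p1 - p2) + Y * (q1 - q2))
    by (unfold X, Y, fp; ring).
  assert (HX : Rabs X <= Lip).
  { unfold X. rewrite Rabs_mult.
    assert (Rabs (1 - p1 - p2) <= 1) by (apply Rabs_le; lra).
    assert (Rabs (ba / N - q1 * (bv - c)) <= ba / N + bv) by (apply Rabs_le; split; nra).
    assert (Rabs (1 - p1 - p2) * Rabs (ba / N - q1 * (bv - c)) <= 1 * (ba / N + bv))
      by (apply Rmult_le_compat; auto using Rabs_pos). lra. }
  assert (HY : Rabs Y <= Lip).
  { assert (0 <= p2 * (1 - p2) <= 1) by nra.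
    assert (0 <= p2 * (1 - p2) * (bv - c) <= bv - c) by (split; nra).
    unfold Y. apply Rabs_le. lra. }
  eapply Rle_trans; [apply Rabs_triang|]. rewrite !Rabs_mult.
  pose proof (Rabs_pos (p1 - p2)). pose proof (Rabs_pos (q1 - q2)). nra.
Qed.

Lemma fq_lipschitz : lipschitz01 (fq ba bv c n) Lip.
Proof.
  intros p1 q1 p2 q2 Hp1 Hq1 Hp2 Hq2. unfold in01 in *.
  pose proof N_pos. pose proof c_lt_bv. pose proof (dgeo_bounds n 1 ltac:(lra)).
  assert (Hg : 0 < bv / N) by (apply Rdiv_lt_0_compat; lra).
  assert (0 <= ba / N) by (apply Rdiv_le_0_compat; lra).
  assert (HgN : bv / N * N = bv) by (field; lra).
  pose proof (geo_between p1 ltac:(lra)).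
  set (X := (1 - q1 - q2) * (bv / N * geo n p1 - c)).
  set (Y := q2 * (1 - q2) * (bv / N)).
  replace (fq ba bv c n p1 q1 - fq ba bv c n p2 q2)
    with (X * (q1 - q2) + Y * (geo n p1 - geo n p2)) by (unfold X, Y, fq; ring).
  assert (HX : Rabs X <= bv + c).
  { unfold X. rewrite Rabs_mult.
    assert (Rabs (1 - q1 - q2) <= 1) by (apply Rabs_le; lra).
    assert (Rabs (bv / N * geo n p1 - c) <= bv + c) by (apply Rabs_le; split; nra).
    assert (Rabs (1 - q1 - q2) * Rabs (bv / N * geo n p1 - c) <= 1 * (bv + c))
      by (apply Rmult_le_compat; auto using Rabs_pos). lra. }
  assert (HY : Rabs Y <= bv / N).
  { assert (0 <= q2 * (1 - q2) <= 1) by nra.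
    unfold Y. apply Rabs_le. split; nra. }
  pose proof (geo_lipschitz n p1 p2 ltac:(lra) ltac:(lra)).
  eapply Rle_trans; [apply Rabs_triang|]. rewrite !Rabs_mult.
  assert (Rabs X * Rabs (q1 - q2) <= Lip * Rabs (q1 - q2))
    by (apply Rmult_le_compat_r; [apply Rabs_pos | nra]).
  assert (Rabs Y * Rabs (geo n p1 - geo n p2) <= bv / N * dgeo n 1 * Rabs (p1 - p2))
    by (rewrite Rmult_assoc; apply Rmult_le_compat; auto using Rabs_pos).
  assert (bv / N * dgeo n 1 * Rabs (p1 - p2) <= Lip * Rabs (p1 - p2))
    by (apply Rmult_le_compat_r; [apply Rabs_pos | lra]).
  lra.
Qed.

Lemma solution_unique p1 q1 p2 q2 :
  is_solution ba bv c n p1 q1 -> is_solution ba bv c n p2 q2 -> p1 0 = p2 0 -> q1 0 = q2 0 ->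
  forall t, p1 t = p2 t /\ q1 t = q2 t.
Proof.
  apply (lipschitz01_uniqueness _ _ Lip);
    [apply Lip_nonneg | apply fp_lipschitz | apply fq_lipschitz].
Qed.

Lemma solution_shift p q T : is_solution ba bv c n p q ->
  is_solution ba bv c n (fun t => p (t + T)) (fun t => q (t + T)).
Proof.
  intros Hsol t. destruct (Hsol (t + T)) as (Hp & Hq & Dp & Dq).
  assert (Ds : is_derive (fun s => s + T) t 1) by (auto_derive; auto; ring).
  split; [exact Hp | split; [exact Hq | split]].
  - rewrite <- (Rmult_1_l (fp _ _ _ _ _ _)). now apply (is_derive_Rcomp p (fun s => s + T)).
  - rewrite <- (Rmult_1_l (fq _ _ _ _ _ _)). now apply (is_derive_Rcomp q (fun s => s + T)).
Qed.

Lemma fixed_p_exists : exists ps, in01 ps /\ geo n ps = c * N / bv.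
Proof.
  pose proof N_pos. pose proof c_lt_bv.
  assert (HK1 : 1 < c * N / bv) by (apply (Rmult_lt_reg_r bv); auto; field_simplify; lra).
  assert (HKN : c * N / bv < N) by (apply (Rmult_lt_reg_r bv); auto; field_simplify; nra).
  destruct (IVT_gen (geo n) 0 1 (c * N / bv)) as [x [Hx Hgx]].
  - intros x. apply (continuity_pt_of_is_derive _ _ _ (is_derive_geo n x)).
  - rewrite geo_at_0, geo_at_1, Rmin_left, Rmax_right; lra.
  - rewrite Rmin_left, Rmax_right in Hx by lra. exists x. split; [|exact Hgx].
    destruct (Req_dec x 0) as [->|]; [rewrite geo_at_0 in Hgx; lra|].
    destruct (Req_dec x 1) as [->|]; [rewrite geo_at_1 in Hgx; lra|].
    split; lra.
Qed.

Lemma fixed_p_bounds ps : 0 <= ps -> geo n ps = c * N / bv ->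
  1 - bv / (c * N) <= ps <= c * N / bv - 1.
Proof.
  intros Hps Hgeo. pose proof N_pos. split.
  - pose proof (geo_mul n ps) as Hmul. rewrite Hgeo in Hmul.
    assert (0 <= ps ^ S n) by (apply pow_le; lra).
    assert ((1 - ps) * (c * N) <= bv) by (apply (Rmult_le_reg_r (/ bv));
      [apply Rinv_0_lt_compat; lra | field_simplify; lra]).
    apply (Rmult_le_reg_r (c * N)); [nra|]. field_simplify; nra.
  - pose proof (geo_gap n 0 ps n_pos ltac:(lra)). rewrite geo_at_0 in *. lra.
Qed.

Section FixedPoint.

Variable ps : R.
Hypotheses (ps_in01 : in01 ps) (geo_ps : geo n ps = c * N / bv).

Lemma vegf_gain_sign x : 0 <= x -> bv / N * (x - ps) ^ 2 <= (x - ps) * (bv / N * geo n x - c).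
Proof.
  intros Hx. pose proof N_pos. unfold in01 in ps_in01.
  replace c with (bv / N * geo n ps) by (rewrite geo_ps; field; lra).
  pose proof (geo_strongly_increasing n x ps n_pos Hx ltac:(lra)).
  assert (0 < bv / N) by (apply Rdiv_lt_0_compat; lra). nra.
Qed.

Lemma Rfun_valley : valley (fun a => Rfun ba bv c n (ps + a)) (0 - ps) (1 - ps).
Proof.
  apply (valley_of_is_derive _ (fun x => (bv / N * geo n x - c) / (x * (1 - x)))).
  - exact ps_in01.
  - intros x Hx. now apply is_derive_Rfun.
  - intros x Hx Hne. pose proof N_pos. pose proof (vegf_gain_sign x ltac:(lra)).
    assert (0 < bv / N * (x - ps) ^ 2).
    { apply Rmult_lt_0_compat; [apply Rdiv_lt_0_compat; lra | apply pow2_gt_0; lra]. }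
    cbv beta. replace ((x - ps) * ((bv / N * geo n x - c) / (x * (1 - x))))
      with ((x - ps) * (bv / N * geo n x - c) / (x * (1 - x))) by (field; lra).
    apply Rdiv_lt_0_compat; [lra | nra].
Qed.

Lemma Sfun_valley : valley (fun b => - Sfun ba bv c n (qs + b)) (0 - qs) (1 - qs).
Proof.
  pose proof N_pos. pose proof c_lt_bv.
  apply (valley_of_is_derive (fun y => - Sfun ba bv c n y)
           (fun y => - ((bv - c) * (qs - y) / (y * (1 - y)))) qs 0 1).
  - exact qs_in01.
  - intros y Hy. now apply (is_derive_opp (Sfun ba bv c n)), is_derive_Sfun.
  - intros y Hy Hne. cbv beta.
    replace ((y - qs) * - ((bv - c) * (qs - y) / (y * (1 - y))))
      with ((bv - c) * (y - qs) ^ 2 / (y * (1 - y))) by (field; lra).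
    apply Rdiv_lt_0_compat; [apply Rmult_lt_0_compat; [lra | apply pow2_gt_0; lra] | nra].
Qed.

Lemma Hfun_shifted x y :
  Hfun ba bv c n x y = Rfun ba bv c n (ps + (x - ps)) + - Sfun ba bv c n (qs + (y - qs)).
Proof.
  unfold Hfun. replace (ps + (x - ps)) with x by ring. replace (qs + (y - qs)) with y by ring. ring.
Qed.

Lemma Hfun_strict_min x y : in01 x -> in01 y -> (x, y) <> (ps, qs) ->
  Hfun ba bv c n ps qs < Hfun ba bv c n x y.
Proof.
  intros Hx Hy Hne. unfold in01 in *. pose proof qs_in01.
  rewrite (Hfun_shifted x y), (Hfun_shifted ps qs), !Rminus_diag.
  assert (HR : Rfun ba bv c n (ps + 0) <= Rfun ba bv c n (ps + (x - ps))).
  { destruct (Req_dec x ps) as [->|Hx']; [rewrite Rminus_diag; lra|].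
    left. apply (valley_min (fun a => Rfun ba bv c n (ps + a)) (0 - ps) (1 - ps));
      [apply Rfun_valley | lra | lra]. }
  destruct (Req_dec y qs) as [->|Hy'].
  - assert (x <> ps) by (intros ->; now apply Hne).
    assert (Rfun ba bv c n (ps + 0) < Rfun ba bv c n (ps + (x - ps))).
    { apply (valley_min (fun a => Rfun ba bv c n (ps + a)) (0 - ps) (1 - ps));
        [apply Rfun_valley | lra | lra]. }
    rewrite Rminus_diag. lra.
  - assert (- Sfun ba bv c n (qs + 0) < - Sfun ba bv c n (qs + (y - qs))).
    { apply (valley_min (fun b => - Sfun ba bv c n (qs + b)) (0 - qs) (1 - qs));
        [apply Sfun_valley | unfold in01 in *; lra | lra]. }
    lra.
Qed.

Section Trajectory.

Variables p q : R -> R.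
Hypothesis sol : is_solution ba bv c n p q.

Lemma solution_confined : exists d, 0 < d /\ forall t, d <= p t <= 1 - d /\ d <= q t <= 1 - d.
Proof.
  destruct (Hfun_blowup (Hfun ba bv c n (p 0) (q 0))) as [d [Hd Hbig]].
  exists d. split; auto. intros t. destruct (sol t) as (Hp & Hq & _).
  pose proof (Hfun_conserved p q sol t) as Hcons.
  assert (Hfar : ~ (p t < d \/ 1 - p t < d \/ q t < d \/ 1 - q t < d)).
  { intros Hnear. specialize (Hbig (p t) (q t) Hp Hq ltac:(lra)). lra. }
  repeat split; apply Rnot_lt_le; intros ?; apply Hfar; lra.
Qed.

Lemma solution_center : exists k,
  conservative_center k (fun t => p t - ps) (fun t => q t - qs)
    (fun t => fp ba bv c n (p t) (q t)) (fun t => fq ba bv c n (p t) (q t))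
    (fun a => Rfun ba bv c n (ps + a)) (fun b => - Sfun ba bv c n (qs + b))
    (Hfun ba bv c n (p 0) (q 0)) (0 - ps) (1 - ps) (0 - qs) (1 - qs).
Proof.
  destruct solution_confined as [d [Hd Hconf]].
  pose proof N_pos. pose proof c_lt_bv.
  assert (Hg : 0 < bv / N) by (apply Rdiv_lt_0_compat; lra).
  set (k := d * d * Rmin (bv / N) (bv - c)).
  pose proof (Rmin_l (bv / N) (bv - c)). pose proof (Rmin_r (bv / N) (bv - c)).
  assert (Hmin : 0 < Rmin (bv / N) (bv - c)) by (apply Rmin_pos; lra).
  exists k. split; [split; [| split; [| split; [| split]]] | split; [exact Rfun_valley |
    split; [exact Sfun_valley | split]]].
  - unfold k. apply Rmult_lt_0_compat; [nra | exact Hmin].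
  - intros t. apply is_derive_minus_const, sol.
  - intros t. apply is_derive_minus_const, sol.
  - intros t. destruct (Hconf t) as [Hp Hq].
    pose proof (vegf_gain_sign (p t) ltac:(lra)).
    assert (Hqq : d * d <= q t * (1 - q t)) by nra.
    assert (Hu2 : 0 <= (p t - ps) ^ 2) by apply pow2_ge_0.
    assert (k * (p t - ps) ^ 2 <= q t * (1 - q t) * (bv / N * (p t - ps) ^ 2)).
    { unfold k. rewrite Rmult_assoc. apply Rmult_le_compat; nra. }
    unfold fq. nra.
  - intros t. destruct (Hconf t) as [Hp Hq]. rewrite fp_factor.
    assert (Hpp : d * d <= p t * (1 - p t)) by nra.
    assert (Hv2 : 0 <= (q t - qs) ^ 2) by apply pow2_ge_0.
    assert (k * (q t - qs) ^ 2 <= p t * (1 - p t) * ((bv - c) * (q t - qs) ^ 2)).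
    { unfold k. rewrite Rmult_assoc. apply Rmult_le_compat; nra. }
    nra.
  - intros t. destruct (Hconf t). lra.
  - intros t. rewrite <- (Hfun_conserved p q sol t), (Hfun_shifted (p t) (q t)). ring.
Qed.

Lemma solution_periodic_orbit : (p 0, q 0) <> (ps, qs) ->
  exists T, 0 < T /\
    (forall t, p (t + T) = p t /\ q (t + T) = q t) /\
    (forall x y, in01 x -> in01 y ->
       Hfun ba bv c n x y = Hfun ba bv c n (p 0) (q 0) -> exists t, p t = x /\ q t = y).
Proof.
  intros Hne. destruct solution_center as [k Center].
  destruct (reach_axis 0 (proj1 Center)) as [s0 [Hu0 Hv0]].
  { intros Heq. injection Heq as Hp Hq. apply Hne. f_equal; lra. }
  destruct (circuit s0 Center Hu0 Hv0) as [s4 (Hs4 & Hu4 & Hv4 & Cover)].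
  exists (s4 - s0). split; [lra | split].
  - intros t.
    destruct (solution_unique (fun t => p (t + s4)) (fun t => q (t + s4))
                (fun t => p (t + s0)) (fun t => q (t + s0)))
      with (t := t - s0) as [Ep Eq]; try apply solution_shift; auto; rewrite ?Rplus_0_l; try lra.
    replace (t - s0 + s4) with (t + (s4 - s0)) in Ep, Eq by ring.
    replace (t - s0 + s0) with t in Ep, Eq by ring. auto.
  - intros x y Hx Hy Hlevel. unfold in01 in *.
    destruct (Cover (x - ps) (y - qs)) as [t [Ht1 Ht2]]; try lra.
    + rewrite <- Hlevel, (Hfun_shifted x y). ring.
    + exists t. split; lra.
Qed.

End Trajectory.

End FixedPoint.

End DoubleGoods.

Theorem mainTheorem5 :
  forall (n : nat) (ba bv c : R),
    (1 <= n)%nat -> 0 < ba -> 0 < bv -> 0 < c ->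
    ba < (bv - c) * INR (n + 1) -> bv < c * INR (n + 1) ->
    exists ps qs : R,
      in01 ps /\ in01 qs /\
      qs = ba / ((bv - c) * INR (n + 1)) /\
      geo n ps = c * INR (n + 1) / bv /\
      (forall x, 0 < x -> geo n x = c * INR (n + 1) / bv -> x = ps) /\
      1 - bv / (c * INR (n + 1)) <= ps <= c * INR (n + 1) / bv - 1 /\
      fp ba bv c n ps qs = 0 /\ fq ba bv c n ps qs = 0 /\
      (* H is constant along trajectories in (0,1)^2 *)
      (forall p q : R -> R, is_solution ba bv c n p q ->
         forall t, Hfun ba bv c n (p t) (q t) = Hfun ba bv c n (p 0) (q 0)) /\
      (* (ps,qs) is the unique strict global minimum of H on (0,1)^2 *)
      (forall x y, in01 x -> in01 y -> (x, y) <> (ps, qs) ->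
         Hfun ba bv c n ps qs < Hfun ba bv c n x y) /\
      (* H tends to +oo at the boundary of (0,1)^2 *)
      (forall M, exists d, 0 < d /\
         forall x y, in01 x -> in01 y ->
           (x < d \/ 1 - d < x \/ y < d \/ 1 - d < y) ->
           M < Hfun ba bv c n x y) /\
      (* every other trajectory is a closed orbit: periodic, and its orbit is
         the whole level set of H through its initial point *)
      (forall p q : R -> R, is_solution ba bv c n p q ->
         (p 0, q 0) <> (ps, qs) ->
         exists T, 0 < T /\
           (forall t, p (t + T) = p t /\ q (t + T) = q t) /\
           (forall x y, in01 x -> in01 y ->
              Hfun ba bv c n x y = Hfun ba bv c n (p 0) (q 0) ->
              exists t, p t = x /\ q t = y)).
Proof.
  intros n ba bv c Hn Hba Hbv Hc Hqs Hps.
  destruct (fixed_p_exists n ba bv c) as [ps [Hps01 Hgeo]]; auto.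
  assert (Hps0 : 0 <= ps) by (destruct Hps01; lra).
  exists ps, (ba / ((bv - c) * INR (n + 1))).
  repeat split; try apply Hps01; try apply (qs_in01 n); auto.
  - intros x Hx Hgx. apply (geo_inj n); [auto | lra | auto | congruence].
  - now apply (fixed_p_bounds n ba bv c).
  - now apply (fixed_p_bounds n ba bv c).
  - rewrite (fp_factor n); auto. ring.
  - pose proof (N_pos n Hn). assert (c < bv) by (apply (c_lt_bv n ba bv c); auto).
    unfold fq. rewrite Hgeo. field. repeat split; lra.
  - now apply (Hfun_conserved n ba bv c).
  - now apply (Hfun_strict_min n ba bv c).
  - now apply (Hfun_blowup n ba bv c).
  - now apply (solution_periodic_orbit n ba bv c).
Qed.
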